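(* In Algorithm 6 (described in the context), assume each function $h_{A_i}$ is non-increasing. Then the values $z_1,\dots,z_s$ obtained in its second round form an optimal solution of the minimax problem $$\min_{q_1,\dots,q_s}\ \max_{1\leq i\leq s}h_{A_i}(q_i)\quad\text{s.t.}\quad \sum_{i=1}^sq_i\leq 2z,\quad q_i\in\{0,1,\dots,z\}\ (i=1,\dots,s).$$
   Context: For $A=\{(x_1,y_1),\dots,(x_l,y_l)\}\subset\mathbb{R}^2$ with $x_1<\dots<x_l$, the piecewise function $h_A:[x_1,\infty)\to\mathbb{R}$ is $h_A(x)=y_i$ for $x_i\leq x<x_{i+1}$ ($x_{l+1}=\infty$). Pairs are compared lexicographically: $(a,b)\prec(a',b')$ iff $a<a'$, or $a=a'$ and $b<b'$. Let $z\geq1$ be an integer, $[z]=\{0,1,\dots,z\}$, and $\Gamma=\{2^r:1\leq r\leq\lfloor\log_2z\rfloor, r\in\mathbb{Z}\}\cup\{0,z\}$. In Algorithm 6 (a two-round distributed coreset construction for $k$-center clustering with $z$ outliers over $s$ sites), each site $i$ computes real numbers $\tilde r_{i,q}$ for $q\in\Gamma$ and sends $h_{A_i}$, where $A_i=\{(q,\tilde r_{i,q}):q\in\Gamma\}$. The server sorts the $s(z+1)$ pairs $(h_{A_i}(q),i)$, $i\in\{1,\dots,s\}$, $q\in[z]$, in lexicographically decreasing order and selects the $(2z+1)$-th largest pair $(h_{A_{i_0}}(q_0),i_0)$. Then for $i\neq i_0$, $z_i=\min\{q\in[z]:(h_{A_i}(q),i)\prec(h_{A_{i_0}}(q_0),i_0)\}$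 (with $z_i=z$ if this set is empty), and $z_{i_0}=\min\{q\in\Gamma:h_{A_{i_0}}(q)=h_{A_{i_0}}(q_0)\}$. *)

From mathcomp Require Import all_boot all_order all_algebra.
Set Implicit Arguments. Unset Strict Implicit. Unset Printing Implicit Defensive.
Import Order.TTheory GRing.Theory Num.Theory.
Local Open Scope ring_scope.

Section Alg6.
Variable R : realDomainType.

Definition gamma_seq (z : nat) : seq nat :=
  [:: 0%N; z] ++ [seq (2 ^ r)%N | r <- iota 1 (trunc_log 2 z)].

(* h_{A_i}(q) for A_i = {(g, rt g) : g in Gamma}: the value at the largest
   g in Gamma with g <= q (0 is in Gamma, so this is defined for all q >= 0). *)
Definition hA (z : nat) (rt : nat -> R) (q : nat) : R :=
  rt (\max_(g <- gamma_seq z | (g <= q)%N) g)%N.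

Definition lexlt (p p' : R * nat) : bool :=
  (p.1 < p'.1) || ((p.1 == p'.1) && (p.2 < p'.2)%N).

Variable s : nat.

Definition all_pairs (z : nat) (rt : 'I_s -> nat -> R) : seq (R * nat) :=
  [seq (hA z (rt i) q, (i : nat).+1) | i <- enum 'I_s, q <- iota 0 z.+1].

Definition sorted_desc (z : nat) (rt : 'I_s -> nat -> R) : seq (R * nat) :=
  sort (fun p p' => ~~ lexlt p p') (all_pairs z rt).

(* the (2z+1)-th largest pair (h_{A_{i0}}(q0), i0) *)
Definition pivot (z : nat) (rt : 'I_s -> nat -> R) : R * nat :=
  nth (0, 0%N) (sorted_desc z rt) (2 * z)%N.

Definition zsol (z : nat) (rt : 'I_s -> nat -> R) (i : 'I_s) : nat :=
  let p0 := pivot z rt in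
  if ((i : nat).+1 == p0.2)%N then
    find (fun q => (q \in gamma_seq z) && (hA z (rt i) q == p0.1)) (iota 0 z.+1)
  else
    let P := fun q => lexlt (hA z (rt i) q, (i : nat).+1) p0 in
    if has P (iota 0 z.+1) then find P (iota 0 z.+1) else z.

End Alg6.

(* Let p0 = (v, i0) be the (2z+1)-th largest of the s(z+1) pairs: at most 2z pairs
   lie strictly above p0 and more than 2z lie at or above it.  As the h_{A_i} are
   non-increasing, z_i is the first q at which (h_{A_i}(q), i) falls to p0 or below,
   capped at z; at the site i0 this needs that h_{A_{i0}} changes only at points of
   Gamma.  Hence z_i is at most the number of site-i pairs above p0, so the z_i sum to
   at most 2z, and h_{A_i}(z_i) <= v unless z_i = z.  Conversely, if a feasible q had
   h_{A_i}(q_i) < v at every site, monotonicity would leave at most sum q_i <= 2z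
   pairs at or above p0. *)

From mathcomp Require Import all_boot all_order all_algebra.
From mathcomp Require Import zify.
Set Implicit Arguments. Unset Strict Implicit. Unset Printing Implicit Defensive.
Import Order.TTheory GRing.Theory Num.Theory.
Local Open Scope ring_scope.

Section FirstInIota.
Variable a : pred nat.

Lemma before_find_iota (n j : nat) : (j < find a (iota 0 n))%N -> ~~ a j.
Proof.
move=> lt_j_find; have lt_j_n : (j < n)%N.
  by rewrite -(size_iota 0 n) (leq_trans lt_j_find) ?find_size.
by have := before_find 0%N lt_j_find; rewrite nth_iota // add0n => ->.
Qed.

Lemma find_iota_hit (n : nat) : (find a (iota 0 n) < n)%N -> a (find a (iota 0 n)).
Proof.
move=> lt_find_n; have has_a : has a (iota 0 n) by rewrite has_find size_iota.
by have := nth_find 0%N has_a; rewrite nth_iota // add0n.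
Qed.

Lemma find_iota_le (n q : nat) : a q -> (find a (iota 0 n) <= q)%N.
Proof. by move=> aq; rewrite leqNgt; apply: contraL aq; apply: before_find_iota. Qed.

Lemma find_iota_eq (n m : nat) :
  (m < n)%N -> a m -> (forall j, (j < m)%N -> ~~ a j) -> find a (iota 0 n) = m.
Proof.
move=> lt_m_n am before_m; apply/eqP; rewrite eqn_leq find_iota_le //= leqNgt.
apply/negP => lt_find_m.
by move: (find_iota_hit (ltn_trans lt_find_m lt_m_n)); rewrite (negbTE (before_m _ lt_find_m)).
Qed.

End FirstInIota.

Lemma find_predC_le_count (T : Type) (a : pred T) (s : seq T) :
  (find (fun x => ~~ a x) s <= count a s)%N.
Proof. by elim: s => //= x s IHs; case: (a x). Qed.

Lemma count_iota_le (a : pred nat) (m n : nat) :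
  (forall q, a q -> (q < n)%N) -> (count a (iota 0 m) <= n)%N.
Proof.
move=> a_lt_n; rewrite -size_filter -(size_iota 0 n).
apply: uniq_leq_size; first exact/filter_uniq/iota_uniq.
by move=> q; rewrite mem_filter !mem_iota => /andP[/a_lt_n].
Qed.

Section SortedNonincreasing.
Context {disp : Order.disp_t} {T : orderType disp}.

Lemma sorted_ge_count_nth (x0 : T) (t : seq T) (k : nat) :
  sorted >=%O t -> (k < size t)%N ->
  (count (fun y => nth x0 t k < y)%O t <= k < count (fun y => nth x0 t k <= y)%O t)%N.
Proof.
move=> t_sorted lt_k_t; set x := nth x0 t k.
have ge_nth i j : (i < size t)%N -> (j < size t)%N -> (i <= j)%N -> (nth x0 t j <= nth x0 t i)%O.
  by move=> it jt; apply: (sorted_leq_nth ge_trans ge_refl x0 t_sorted).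
apply/andP; split.
  rewrite -(cat_take_drop k t) count_cat.
  have -> : count (fun y => x < y)%O (drop k t) = 0%N.
    apply/eqP; rewrite -leqn0 leqNgt -has_count; apply/(has_nthP x0) => -[i].
    rewrite size_drop nth_drop => it; rewrite ltNge ge_nth //; lia.
  by rewrite addn0 (leq_trans (count_size _ _)) // size_take lt_k_t.
rewrite -(cat_take_drop k.+1 t) count_cat (leq_trans _ (leq_addr _ _)) //.
have : all (fun y => x <= y)%O (take k.+1 t).
  apply/(all_nthP x0) => i; rewrite size_take_min => ik.
  by rewrite nth_take; [apply: ge_nth|]; lia.
by rewrite all_count => /eqP ->; rewrite size_take_min leq_min ltnSn.
Qed.

End SortedNonincreasing.

Section Algorithm6.
Variables (R : realDomainType) (s z : nat) (rt : 'I_s -> nat -> R).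

Local Notation lex := (R *l nat)%type.

Lemma lexltE (p p' : R * nat) : lexlt p p' = ((p : lex) < p')%O.
Proof.
by case: p p' => [x1 x2] [y1 y2]; rewrite ltxi_pair /lexlt /=; case: ltgtP.
Qed.

Lemma lexlt_same_site (v x : R) (k : nat) : lexlt (v, k) (x, k) = (v < x).
Proof. by rewrite /lexlt /= ltnn andbF orbF. Qed.

Lemma lexltNC (p p' : R * nat) : p != p' -> ~~ lexlt p p' = lexlt p' p.
Proof. by move=> neq_pp'; rewrite !lexltE -leNgt le_eqVlt eq_sym (negbTE neq_pp'). Qed.

Lemma lexltN_le (p : R * nat) (x : R) (i : nat) : ~~ lexlt p (x, i) -> x <= p.1.
Proof. by rewrite /lexlt negb_or -leNgt => /andP[]. Qed.

Lemma hA_succ_notin_gamma (r : nat -> R) (q : nat) :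
  q.+1 \notin gamma_seq z -> hA z r q.+1 = hA z r q.
Proof.
move=> q1_notin; rewrite /hA; congr r.
rewrite big_seq_cond [RHS]big_seq_cond; apply: eq_bigl => g.
case g_in: (g \in gamma_seq z) => //=.
have : g != q.+1 by apply: contraNneq q1_notin => <-.
by move=> /negbTE g_neq; rewrite leq_eqVlt g_neq ltnS.
Qed.

Lemma first_hA_in_gamma (r : nat -> R) (P : pred R) (m : nat) :
  P (hA z r m) -> (forall q, (q < m)%N -> ~~ P (hA z r q)) -> m \in gamma_seq z.
Proof.
case: m => [|k] Pm before_m; first by rewrite inE.
apply: contraLR Pm => /hA_succ_notin_gamma ->; exact: before_m.
Qed.

Lemma count_all_pairs (P : pred (R * nat)) :
  count P (all_pairs z rt) =
  (\sum_(i < s) count (fun q => P (hA z (rt i) q, (i : nat).+1)) (iota 0 z.+1))%N.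
Proof.
rewrite /all_pairs count_flatten -map_comp sumnE big_map enumT.
by apply: eq_bigr => i _ /=; rewrite count_map.
Qed.

Lemma find_gamma_level (r : nat -> R) (q0 : nat) :
  (forall q q', (q <= q')%N -> hA z r q' <= hA z r q) -> (q0 <= z)%N ->
  find (fun q => (q \in gamma_seq z) && (hA z r q == hA z r q0)) (iota 0 z.+1) =
  find (fun q => hA z r q <= hA z r q0) (iota 0 z.+1).
Proof.
move=> noninc le_q0_z; set v := hA z r q0; set m := find (fun q => hA z r q <= v) _.
have le_m_q0 : (m <= q0)%N by apply: find_iota_le; exact: lexx.
have le_m_z := leq_trans le_m_q0 le_q0_z.
have before_m j : (j < m)%N -> v < hA z r j by move/before_find_iota; rewrite -ltNge.
have hm : hA z r m = v.
  by apply/eqP; rewrite eq_le (@find_iota_hit _ z.+1 le_m_z); exact: noninc.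
apply: find_iota_eq => //= [|j /before_m /gt_eqF ->]; last by rewrite andbF.
rewrite hm eqxx andbT; apply: (@first_hA_in_gamma r (fun x => x <= v)) => [|j /before_m].
  by rewrite hm.
by rewrite ltNge.
Qed.

Lemma perm_sorted_desc : perm_eq (sorted_desc z rt) (all_pairs z rt).
Proof. by rewrite perm_sort. Qed.

Hypothesis s_gt1 : (1 < s)%N.

Lemma size_sorted_desc : (2 * z < size (sorted_desc z rt))%N.
Proof.
rewrite size_sort /all_pairs size_allpairs size_enum_ord size_iota; nia.
Qed.

Lemma pivot_count :
  (count (lexlt (pivot z rt)) (all_pairs z rt) <= 2 * z <
   count (fun p => ~~ lexlt p (pivot z rt)) (all_pairs z rt))%N.
Proof.
have sorted_lex : sorted (>=%O : rel lex) (sorted_desc z rt).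
  rewrite -(eq_sorted (e := fun p p' => ~~ lexlt p p')); last first.
    by move=> p p'; rewrite lexltE -leNgt.
  by apply: sort_sorted => p p'; rewrite !lexltE -!leNgt le_total.
have gtE : lexlt (pivot z rt) =1 (fun p : lex => (pivot z rt : lex) < p)%O := lexltE _.
have geE : (fun p => ~~ lexlt p (pivot z rt)) =1 (fun p : lex => (pivot z rt : lex) <= p)%O.
  by move=> p; rewrite lexltE -leNgt.
rewrite (eq_count gtE) (eq_count geE) -!(permP perm_sorted_desc).
exact: (@sorted_ge_count_nth _ lex (0, 0%N) _ _ sorted_lex size_sorted_desc).
Qed.

Lemma pivot_in_all_pairs :
  exists i0 : 'I_s, exists2 q0, (q0 <= z)%N & pivot z rt = (hA z (rt i0) q0, (i0 : nat).+1).
Proof.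
have : pivot z rt \in all_pairs z rt.
  by rewrite -(perm_mem perm_sorted_desc) mem_nth // size_sorted_desc.
case/allpairsP => -[i q] [_ q_in ->]; exists i; exists q => //.
by move: q_in; rewrite mem_iota add0n ltnS.
Qed.

Hypothesis hA_noninc :
  forall (i : 'I_s) (q q' : nat), (q <= q')%N -> hA z (rt i) q' <= hA z (rt i) q.

Lemma zsolE (i : 'I_s) :
  zsol z rt i =
  minn (find (fun q => ~~ lexlt (pivot z rt) (hA z (rt i) q, (i : nat).+1)) (iota 0 z.+1)) z.
Proof.
have [i0 [q0 le_q0_z pivotE]] := pivot_in_all_pairs.
rewrite /zsol pivotE; set v := hA z (rt i0) q0.
case: eqP => [[/val_inj eq_i_i0] | neq_i_i0].
  subst i.
  have same_site q : ~~ lexlt (v, (i0 : nat).+1) (hA z (rt i0) q, (i0 : nat).+1) =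
                     (hA z (rt i0) q <= v) by rewrite lexlt_same_site -leNgt.
  rewrite (eq_find same_site) (find_gamma_level (hA_noninc i0)) // -/v.
  apply/esym/minn_idPl.
  by apply: leq_trans le_q0_z; apply: find_iota_le; exact: lexx.
have flip q : lexlt (hA z (rt i) q, (i : nat).+1) (v, (i0 : nat).+1) =
              ~~ lexlt (v, (i0 : nat).+1) (hA z (rt i) q, (i : nat).+1).
  by rewrite lexltNC //; apply/eqP => -[_ eq_i0_i]; apply: neq_i_i0; rewrite eq_i0_i.
rewrite (eq_has flip) (eq_find flip).
case: ifP => [has_a | /negbT/hasNfind ->].
  by apply/esym/minn_idPl; move: has_a; rewrite has_find size_iota.
by rewrite size_iota; apply/esym/minn_idPr.
Qed.

Lemma zsol_le (i : 'I_s) : (zsol z rt i <= z)%N.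
Proof. by rewrite zsolE geq_minr. Qed.

Lemma zsol_le_count (i : 'I_s) :
  (zsol z rt i <= count (fun q => lexlt (pivot z rt) (hA z (rt i) q, (i : nat).+1)) (iota 0 z.+1))%N.
Proof. by rewrite zsolE (leq_trans (geq_minl _ _)) ?find_predC_le_count. Qed.

Lemma zsol_below_pivot (i : 'I_s) :
  hA z (rt i) (zsol z rt i) <= (pivot z rt).1 \/ zsol z rt i = z.
Proof.
rewrite zsolE; set f := find _ _; case: (leqP f z) => [le_f_z | _]; last by right.
by left; apply: lexltN_le (@find_iota_hit _ z.+1 le_f_z).
Qed.

Lemma sum_zsol_le : (\sum_(i < s) zsol z rt i <= 2 * z)%N.
Proof.
have /andP[count_gt _] := pivot_count; rewrite count_all_pairs in count_gt.
by apply: leq_trans count_gt; apply: leq_sum => i _; apply: zsol_le_count.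
Qed.

Lemma budget_reaches_pivot (q : 'I_s -> nat) :
  (\sum_(i < s) q i <= 2 * z)%N -> exists i : 'I_s, (pivot z rt).1 <= hA z (rt i) (q i).
Proof.
move=> sum_q; case: (boolP [exists i, (pivot z rt).1 <= hA z (rt i) (q i)]) => [/existsP //|].
move=> /existsPn below; have /andP[_] := pivot_count.
rewrite count_all_pairs ltnNge => /negP; case; apply: leq_trans sum_q.
apply: leq_sum => i _; apply: count_iota_le => q' /negP ge_pivot.
rewrite ltnNge; apply/negP => le_qi_q'; apply: ge_pivot.
by rewrite /lexlt (le_lt_trans (hA_noninc i le_qi_q')) // ltNge below.
Qed.

End Algorithm6.

Theorem lemma19 (R : realDomainType) (s z : nat) (rt : 'I_s -> nat -> R) :
  (1 <= z)%N -> (2 <= s)%N ->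
  (* each h_{A_i} is non-increasing *)
  (forall (i : 'I_s) (q q' : nat), (q <= q')%N -> hA z (rt i) q' <= hA z (rt i) q) ->
  (* feasibility of (z_1, ..., z_s) *)
  (forall i : 'I_s, (zsol z rt i <= z)%N) /\
  (\sum_(i < s) zsol z rt i <= 2 * z)%N /\
  (* optimality: max_i h_{A_i}(z_i) <= max_i h_{A_i}(q_i) for every feasible q *)
  (forall q : 'I_s -> nat,
     (forall i, (q i <= z)%N) -> (\sum_(i < s) q i <= 2 * z)%N ->
     forall j : 'I_s, exists i : 'I_s, hA z (rt j) (zsol z rt j) <= hA z (rt i) (q i)).
Proof.
move=> _ s_gt1 noninc; split; [exact: zsol_le | split; first exact: sum_zsol_le].
move=> q q_le_z sum_q j; case: (zsol_below_pivot s_gt1 noninc j) => [below | ->].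
  have [i reach] := budget_reaches_pivot s_gt1 noninc sum_q.
  by exists i; apply: le_trans below reach.
by exists j; apply: noninc.
Qed.
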